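(* Let $A$ be a braided Hopf algebra over a field $k$ with braiding $\langle\cdot\mid\cdot\rangle$ and antipode $S$, and let $U_0=U_0(A)=U^+\cap U^-\subset A^\circ$. For $x,y\in U_0$ write $x=l^+(a)$ and $y=l^-(b)$ with $a,b\in A$, and set $$(x\mid y)=\langle a\mid S(b)\rangle .$$ Then $(\cdot\mid\cdot)$ is a well-defined bilinear form on $U_0$, and it is a braiding on the Hopf algebra $U_0$.
   Context: Throughout, for a bialgebra $A$ we use Sweedler notation $\Delta(a)=\sum a_{(1)}\otimes a_{(2)}$. A braiding on a bialgebra $A$ over a field $k$ is a bilinear form $\langle\cdot\mid\cdot\rangle:A\times A\to k$ such that for all $a,b,c\in A$: (1) $\sum\langle a_{(1)}\mid b_{(1)}\rangle\, b_{(2)}a_{(2)}=\sum\langle a_{(2)}\mid b_{(2)}\rangle\, a_{(1)}b_{(1)}$; (2) $\langle\cdot\mid\cdot\rangle$ is invertible in the convolution algebra $(A\otimes A)^*$; (3) $\langle a\mid bc\rangle=\sum\langle a_{(1)}\mid b\rangle\langle a_{(2)}\mid c\rangle$; (4) $\langle ab\mid c\rangle=\sum\langle b\mid c_{(1)}\rangle\langle a\mid c_{(2)}\rangle$. A braided bialgebra (resp. braided Hopf algebra) is a bialgebra (resp. Hopf algebra) equipped with a braiding. For a Hopf algebra $A$, $A^\circ$ denotes its restricted (finite) dual Hopf algebra. For a braided Hopf algebra $A$ define $l^{\pm}:A\to A^\circ$ by $l^+(a)(b)=\langle a\mid b\rangle$ and $l^-(a)(b)=\langle b\mid S(a)\rangle$;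 these are Hopf algebra maps $A^{op}\to A^\circ$. Let $U^\pm=l^\pm(A)$ (Hopf subalgebras of $A^\circ$), let $U(A)$ (the FRT dual) be the Hopf subalgebra of $A^\circ$ generated by $U^+$ and $U^-$, and let $U_0(A)=U^+\cap U^-$, a Hopf subalgebra of $A^\circ$. *)

(* Hopf algebras over a field k, with tensors represented by
   finite lists of pairs (Sweedler representatives). *)
From mathcomp Require Import all_boot all_order all_algebra.
Set Implicit Arguments. Unset Strict Implicit. Unset Printing Implicit Defensive.
Import GRing.Theory.
Local Open Scope ring_scope.

Section BraidedHopf.
Variable k : fieldType.
Variable A : algType k.

Definition linear_to_k (f : A -> k) : Prop :=
  forall (c : k) (u v : A), f (c *: u + v) = c * f u + f v.

Definition linear_endo (f : A -> A) : Prop :=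
  forall (c : k) (u v : A), f (c *: u + v) = c *: f u + f v.

Definition bilinear_form (f : A -> A -> k) : Prop :=
  (forall b, linear_to_k (fun a => f a b)) /\ (forall a, linear_to_k (f a)).

Definition trilinear_form (f : A -> A -> A -> k) : Prop :=
  [/\ (forall b c, linear_to_k (fun a => f a b c)),
      (forall a c, linear_to_k (fun b => f a b c)) &
      (forall a b, linear_to_k (f a b))].

(* Two finite lists of pairs represent the same element of A (x) A iff they are
   not separated by any bilinear form A x A -> k. *)
Definition teq2 (s t : seq (A * A)) : Prop :=
  forall f, bilinear_form f ->
    \sum_(p <- s) f p.1 p.2 = \sum_(p <- t) f p.1 p.2.

(* ---------- Hopf algebra structure on A ----------
   Delta a is a list [:: (a_(1), a_(2)); ...] representing Delta(a) in A (x) A. *)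
Definition is_hopf (Delta : A -> seq (A * A)) (eps : A -> k) (S : A -> A) : Prop :=
  (forall (c : k) (a b : A),
      teq2 (Delta (c *: a + b)) ([seq (c *: p.1, p.2) | p <- Delta a] ++ Delta b)) /\
  (forall a f, trilinear_form f ->
      \sum_(p <- Delta a) \sum_(q <- Delta p.1) f q.1 q.2 p.2
    = \sum_(p <- Delta a) \sum_(q <- Delta p.2) f p.1 q.1 q.2) /\
  linear_to_k eps /\
  (forall a, \sum_(p <- Delta a) eps p.1 *: p.2 = a) /\
  (forall a, \sum_(p <- Delta a) eps p.2 *: p.1 = a) /\
  (forall a b, teq2 (Delta (a * b))
                    [seq (p.1 * q.1, p.2 * q.2) | p <- Delta a, q <- Delta b]) /\
  teq2 (Delta 1) [:: (1, 1)] /\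
  (forall a b, eps (a * b) = eps a * eps b) /\
  eps 1 = 1 /\
  linear_endo S /\
  (forall a, \sum_(p <- Delta a) S p.1 * p.2 = (eps a)%:A) /\
  (forall a, \sum_(p <- Delta a) p.1 * S p.2 = (eps a)%:A).

Definition is_braiding (Delta : A -> seq (A * A)) (eps : A -> k)
    (br : A -> A -> k) : Prop :=
  bilinear_form br /\
  (forall a b,
      \sum_(p <- Delta a) \sum_(q <- Delta b) br p.1 q.1 *: (q.2 * p.2)
    = \sum_(p <- Delta a) \sum_(q <- Delta b) br p.2 q.2 *: (p.1 * q.1)) /\
  (exists brinv, bilinear_form brinv /\
     forall a b,
       \sum_(p <- Delta a) \sum_(q <- Delta b) br p.1 q.1 * brinv p.2 q.2 = eps a * eps b /\
       \sum_(p <- Delta a) \sum_(q <- Delta b) brinv p.1 q.1 * br p.2 q.2 = eps a * eps b) /\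
  (forall a b c, br a (b * c) = \sum_(p <- Delta a) br p.1 b * br p.2 c) /\
  (forall a b c, br (a * b) c = \sum_(p <- Delta c) br b p.1 * br a p.2).

(* ---------- the dual side: elements of A° are functionals A -> k ---------- *)
Definition lplus (br : A -> A -> k) (a : A) : A -> k := fun b => br a b.
Definition lminus (br : A -> A -> k) (S : A -> A) (a : A) : A -> k :=
  fun b => br b (S a).

Definition inU0 (br : A -> A -> k) (S : A -> A) (x : A -> k) : Prop :=
  (exists a, x =1 lplus br a) /\ (exists b, x =1 lminus br S b).

(* product of A° (convolution, dual to Delta); the unit is eps, the counit
   is evaluation at 1 *)
Definition dual_mul (Delta : A -> seq (A * A)) (x y : A -> k) : A -> k :=
  fun c => \sum_(r <- Delta c) x r.1 * y r.2.

(* dx is a representative of Delta(x) in P (x) P : a finite list of pairs of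
   elements of P with x(ab) = sum x_(1)(a) x_(2)(b) *)
Definition coprod_rep (P : (A -> k) -> Prop) (x : A -> k)
    (dx : seq ((A -> k) * (A -> k))) : Prop :=
  (forall i, (i < size dx)%N -> P (nth (x, x) dx i).1 /\ P (nth (x, x) dx i).2) /\
  (forall a b, x (a * b) = \sum_(p <- dx) p.1 a * p.2 b).

Definition bilinear_on (P : (A -> k) -> Prop) (f : (A -> k) -> (A -> k) -> k) : Prop :=
  (forall (c : k) x x' y, P x -> P x' -> P y ->
      f (fun a => c * x a + x' a) y = c * f x y + f x' y) /\
  (forall (c : k) x y y', P x -> P y -> P y' ->
      f x (fun a => c * y a + y' a) = c * f x y + f x y').

(* a braiding on the sub-Hopf algebra P of A° (coproduct, product and counit
   inherited from A°) *)
Definition is_braiding_on (Delta : A -> seq (A * A)) (P : (A -> k) -> Prop)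
    (form : (A -> k) -> (A -> k) -> k) : Prop :=
  bilinear_on P form /\
  (forall x, P x -> exists dx, coprod_rep P x dx) /\
  (forall x y dx dy, P x -> P y -> coprod_rep P x dx -> coprod_rep P y dy ->
     forall c : A,
       \sum_(p <- dx) \sum_(q <- dy) form p.1 q.1 * dual_mul Delta q.2 p.2 c
     = \sum_(p <- dx) \sum_(q <- dy) form p.2 q.2 * dual_mul Delta p.1 q.1 c) /\
  (exists inv, bilinear_on P inv /\
     forall x y dx dy, P x -> P y -> coprod_rep P x dx -> coprod_rep P y dy ->
       \sum_(p <- dx) \sum_(q <- dy) form p.1 q.1 * inv p.2 q.2 = x 1 * y 1 /\
       \sum_(p <- dx) \sum_(q <- dy) inv p.1 q.1 * form p.2 q.2 = x 1 * y 1) /\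
  (forall x y z dx, P x -> P y -> P z -> coprod_rep P x dx ->
     form x (dual_mul Delta y z) = \sum_(p <- dx) form p.1 y * form p.2 z) /\
  (forall x y z dz, P x -> P y -> P z -> coprod_rep P z dz ->
     form (dual_mul Delta x y) z = \sum_(p <- dz) form y p.1 * form x p.2).

End BraidedHopf.

(* For x = l+(a) and y = l-(b) the number <a | S b> is both y(a) and x(S b),
   so it does not depend on the chosen preimages.  Convolution-inverse
   arguments in the algebras of bilinear and trilinear forms on A show that
   <a | 1> = eps(a), that (a, b) |-> <a | S b> is the convolution inverse of
   <.|.> and is multiplicative in a, and that <S a | S b> = <a | b>; with these
   identities each braiding axiom for (.|.) unfolds, through the coproduct of
   A°, into the corresponding axiom for <.|.>, the inverse form being
   (x, y) |-> <a | b>.  Finally U_0 = U+ /\ U- is closed under the coproduct of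
   A° because (V (x) V) /\ (W (x) W) = (V /\ W) (x) (V /\ W). *)

From mathcomp Require Import all_boot all_order all_algebra.
From mathcomp Require Import ring.
From Stdlib Require Import Classical ClassicalEpsilon.
Set Implicit Arguments. Unset Strict Implicit. Unset Printing Implicit Defensive.
Import GRing.Theory.
Local Open Scope ring_scope.

Section LinearMaps.
Variables (k : fieldType) (A : algType k).

Lemma lin_form0 (f : A -> k) : linear_to_k f -> f 0 = 0.
Proof.
move=> lf; have := lf 1 0 0; rewrite scale1r addr0 mul1r.
by move=> h; apply: (@addrI _ (f 0)); rewrite addr0 -h.
Qed.

Lemma lin_formD (f : A -> k) : linear_to_k f -> forall u v, f (u + v) = f u + f v.
Proof. by move=> lf u v; rewrite -[u]scale1r lf mul1r scale1r. Qed.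

Lemma lin_formZ (f : A -> k) : linear_to_k f -> forall c u, f (c *: u) = c * f u.
Proof. by move=> lf c u; rewrite -(addr0 (c *: u)) lf lin_form0 // addr0. Qed.

Lemma lin_form_sum (f : A -> k) : linear_to_k f ->
  forall I (s : seq I) (G : I -> A), f (\sum_(i <- s) G i) = \sum_(i <- s) f (G i).
Proof.
move=> lf I s G; elim: s => [|x s IHs]; first by rewrite !big_nil lin_form0.
by rewrite !big_cons lin_formD // IHs.
Qed.

Lemma lin_endo0 (g : A -> A) : linear_endo g -> g 0 = 0.
Proof.
move=> lg; have := lg 1 0 0; rewrite !scale1r addr0.
by move=> h; apply: (@addrI _ (g 0)); rewrite addr0 -h.
Qed.

Lemma lin_endoZ (g : A -> A) : linear_endo g -> forall c u, g (c *: u) = c *: g u.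
Proof. by move=> lg c u; rewrite -(addr0 (c *: u)) lg lin_endo0 // addr0. Qed.

Lemma lin_endo_sum (g : A -> A) : linear_endo g ->
  forall I (s : seq I) (G : I -> A), g (\sum_(i <- s) G i) = \sum_(i <- s) g (G i).
Proof.
move=> lg I s G; elim: s => [|x s IHs]; first by rewrite !big_nil lin_endo0.
by rewrite !big_cons -(scale1r (G x)) lg !scale1r IHs.
Qed.

Lemma lin_form_big I (s : seq I) (F : I -> A -> k) :
  (forall i, linear_to_k (F i)) -> linear_to_k (fun x => \sum_(i <- s) F i x).
Proof. by move=> lF c u v; rewrite mulr_sumr -big_split; apply: eq_bigr => i _; apply: lF. Qed.

Lemma lin_formMl (f : A -> k) (c0 : k) : linear_to_k f -> linear_to_k (fun x => f x * c0).
Proof. by move=> lf c u v; rewrite lf mulrDl mulrA. Qed.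

Lemma lin_formMr (f : A -> k) (c0 : k) : linear_to_k f -> linear_to_k (fun x => c0 * f x).
Proof. by move=> lf c u v; rewrite lf mulrDr mulrCA. Qed.

Lemma lin_form_comp (f : A -> k) (g : A -> A) : linear_to_k f -> linear_endo g ->
  linear_to_k (fun x => f (g x)).
Proof. by move=> lf lg c u v; rewrite lg lf. Qed.

Lemma bilinear_compl (f : A -> A -> k) (g : A -> A) b : bilinear_form f -> linear_endo g ->
  linear_to_k (fun x => f (g x) b).
Proof. by move=> bf; apply: (lin_form_comp (bf.1 b)). Qed.

Lemma bilinear_compr (f : A -> A -> k) (g : A -> A) a : bilinear_form f -> linear_endo g ->
  linear_to_k (fun x => f a (g x)).
Proof. by move=> bf; apply: (lin_form_comp (bf.2 a)). Qed.

Lemma lin_endo_id : linear_endo (@id A).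
Proof. by []. Qed.

Lemma lin_endoMl (a : A) : linear_endo (fun x => x * a).
Proof. by move=> c u v; rewrite mulrDl scalerAl. Qed.

Lemma lin_endoMr (a : A) : linear_endo (fun x => a * x).
Proof. by move=> c u v; rewrite mulrDr scalerAr. Qed.

Lemma lin_endo_comp (g h : A -> A) : linear_endo g -> linear_endo h ->
  linear_endo (fun x => g (h x)).
Proof. by move=> lg lh c u v; rewrite lh lg. Qed.

End LinearMaps.

Section FiniteRankDecomposition.
Variables (k : fieldType) (T : Type) (P : (T -> k) -> Prop).
Hypothesis P_ext : forall f g, f =1 g -> P f -> P g.
Hypothesis P_lincomb : forall c f g, P f -> P g -> P (fun a => c * f a + g a).

Lemma nonzero_term_split (s : seq ((T -> k) * (T -> k))) a0 b0 :
  \sum_(p <- s) p.1 a0 * p.2 b0 != 0 ->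
  exists s1 f g s2, s = s1 ++ (f, g) :: s2 /\ f a0 != 0.
Proof.
elim: s => [|[f g] s IHs]; first by rewrite big_nil eqxx.
rewrite big_cons /=; have [f0 | nz_f] := eqVneq (f a0) 0; last by exists [::], f, g, s.
rewrite f0 mul0r add0r => /IHs[s1 [f' [g' [s2 [-> nz_f']]]]].
by exists ((f, g) :: s1), f', g', s2.
Qed.

(* Subtracting the rank-one term [F(., b0) F(a0, .) / F(a0, b0)] kills the
   row [u = a0]; the term [(f, g)] with [f a0 != 0] can then be eliminated. *)
Lemma rank_one_residual (F : T -> T -> k) s1 f g s2 a0 b0 :
  (forall u v, F u v = \sum_(p <- s1 ++ (f, g) :: s2) p.1 u * p.2 v) ->
  f a0 != 0 -> F a0 b0 != 0 ->
  exists s', size s' = (size s1 + size s2)%N /\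
    forall u v, F u v - F u b0 * (F a0 v / F a0 b0) = \sum_(p <- s') p.1 u * p.2 v.
Proof.
set t := F a0 b0 => F_def nz_f nz_t.
pose w (p : (T -> k) * (T -> k)) v := p.2 v - p.2 b0 * (F a0 v / t).
have residualE u v : F u v - F u b0 * (F a0 v / t)
    = \sum_(p <- s1 ++ (f, g) :: s2) p.1 u * w p v.
  by rewrite (F_def u v) (F_def u b0) mulr_suml -sumrB; apply: eq_bigr => p _; rewrite /w; ring.
have row_a0 v : \sum_(p <- s1 ++ (f, g) :: s2) p.1 a0 * w p v = 0.
  by rewrite -residualE /t; field.
exists [seq (fun u => p.1 u - p.1 a0 / f a0 * f u, w p) | p <- s1 ++ s2].
split=> [|u v]; first by rewrite size_map size_cat.
have split_sum r : \sum_(p <- r) (p.1 u - p.1 a0 / f a0 * f u) * w p v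
    = \sum_(p <- r) p.1 u * w p v - f u / f a0 * \sum_(p <- r) p.1 a0 * w p v.
  by rewrite mulr_sumr -sumrB; apply: eq_bigr => p _; ring.
move: (row_a0 v); rewrite residualE big_map !big_cat !big_cons !split_sum /=.
set B1 := \sum_(p <- s1) p.1 a0 * w p v; set B2 := \sum_(p <- s2) p.1 a0 * w p v.
move=> row_a0v.
have -> : w (f, g) v = - (B1 + B2) / f a0.
  apply: (mulfI nz_f); rewrite mulrCA divff // mulr1.
  by rewrite -[LHS]subr0 -row_a0v; ring.
by field.
Qed.

(* The functional form of [(V (x) V) /\ (W (x) W) = (V /\ W) (x) (V /\ W)]. *)
Lemma finite_rank_decomposition (F : T -> T -> k) (s : seq ((T -> k) * (T -> k))) :
  (forall u v, F u v = \sum_(p <- s) p.1 u * p.2 v) ->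
  (forall v, P (fun u => F u v)) -> (forall u, P (fun v => F u v)) ->
  exists d : seq ((T -> k) * (T -> k)),
    (forall i x0, (i < size d)%N -> P (nth x0 d i).1 /\ P (nth x0 d i).2) /\
    forall u v, F u v = \sum_(p <- d) p.1 u * p.2 v.
Proof.
have P_scale c f : P f -> P (fun a => c * f a).
  move=> Pf; apply: P_ext (P_lincomb (c - 1) Pf Pf) => a.
  by rewrite mulrBl mul1r subrK.
have [n] := ubnP (size s); elim: n => // n IHn in F s *.
move=> size_s F_def P_row P_col.
have [[a0 [b0 nz_t]] | F0] := classic (exists a0 b0, F a0 b0 != 0); last first.
  exists [::]; split=> // u v; rewrite big_nil.
  by apply/eqP; apply/negPn/negP => nz; apply: F0; exists u, v.
have := nz_t; rewrite F_def => /nonzero_term_split[s1 [f [g [s2 [s_def nz_f]]]]].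
rewrite {}s_def in size_s F_def.
have [s' [size_s' residual_def]] := rank_one_residual F_def nz_f nz_t.
have [|||d [P_d d_def]] := IHn _ s' _ residual_def.
- by move: size_s; rewrite size_s' size_cat /= addnS.
- move=> v; apply: P_ext (P_lincomb (- (F a0 v / F a0 b0)) (P_row b0) (P_row v)) => u.
  by ring.
- move=> u; apply: P_ext (P_lincomb (- (F u b0 / F a0 b0)) (P_col a0) (P_col u)) => v.
  by ring.
exists ((fun u => (F a0 b0)^-1 * F u b0, fun v => F a0 v) :: d); split.
  by move=> [|i] x0 //= lt_i; [split; [apply: P_scale | apply: P_col] | apply: P_d].
by move=> u v; rewrite big_cons /= -d_def; field.
Qed.

End FiniteRankDecomposition.

Lemma exchange_big3 (R : nmodType) (I J K : Type) (s : seq I) (t : seq J) (u : seq K)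
    (F : I -> J -> K -> R) :
  \sum_(i <- s) \sum_(j <- t) \sum_(l <- u) F i j l =
  \sum_(l <- u) \sum_(i <- s) \sum_(j <- t) F i j l.
Proof.
rewrite (eq_bigr (fun i => \sum_(l <- u) \sum_(j <- t) F i j l)) => [|i _].
  exact: exchange_big.
exact: exchange_big.
Qed.

Section BraidedHopfAlgebra.
Variables (k : fieldType) (A : algType k).
Variables (Delta : A -> seq (A * A)) (eps : A -> k) (S : A -> A) (br : A -> A -> k).
Hypothesis hopfA : is_hopf Delta eps S.
Hypothesis braidA : is_braiding Delta eps br.

Let Delta_linear c a b :
  teq2 (Delta (c *: a + b)) ([seq (c *: p.1, p.2) | p <- Delta a] ++ Delta b).
Proof. exact: hopfA.1. Qed.
Let coassoc a f : trilinear_form f ->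
    \sum_(p <- Delta a) \sum_(q <- Delta p.1) f q.1 q.2 p.2
  = \sum_(p <- Delta a) \sum_(q <- Delta p.2) f p.1 q.1 q.2.
Proof. exact: hopfA.2.1. Qed.
Let eps_linear : linear_to_k eps.
Proof. exact: hopfA.2.2.1. Qed.
Let counitl a : \sum_(p <- Delta a) eps p.1 *: p.2 = a.
Proof. exact: hopfA.2.2.2.1. Qed.
Let counitr a : \sum_(p <- Delta a) eps p.2 *: p.1 = a.
Proof. exact: hopfA.2.2.2.2.1. Qed.
Let DeltaM a b :
  teq2 (Delta (a * b)) [seq (p.1 * q.1, p.2 * q.2) | p <- Delta a, q <- Delta b].
Proof. exact: hopfA.2.2.2.2.2.1. Qed.
Let Delta1 : teq2 (Delta 1) [:: (1, 1)].
Proof. exact: hopfA.2.2.2.2.2.2.1. Qed.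
Let epsM a b : eps (a * b) = eps a * eps b.
Proof. exact: hopfA.2.2.2.2.2.2.2.1. Qed.
Let eps1 : eps 1 = 1.
Proof. exact: hopfA.2.2.2.2.2.2.2.2.1. Qed.
Let S_linear : linear_endo S.
Proof. exact: hopfA.2.2.2.2.2.2.2.2.2.1. Qed.
Let antipodel a : \sum_(p <- Delta a) S p.1 * p.2 = (eps a)%:A.
Proof. exact: hopfA.2.2.2.2.2.2.2.2.2.2.1. Qed.
Let antipoder a : \sum_(p <- Delta a) p.1 * S p.2 = (eps a)%:A.
Proof. exact: hopfA.2.2.2.2.2.2.2.2.2.2.2. Qed.

Let br_bilinear : bilinear_form br.
Proof. exact: braidA.1. Qed.
Let br_braid a b :
    \sum_(p <- Delta a) \sum_(q <- Delta b) br p.1 q.1 *: (q.2 * p.2)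
  = \sum_(p <- Delta a) \sum_(q <- Delta b) br p.2 q.2 *: (p.1 * q.1).
Proof. exact: braidA.2.1. Qed.
Let br_invertible : exists brinv, bilinear_form brinv /\ forall a b,
  \sum_(p <- Delta a) \sum_(q <- Delta b) br p.1 q.1 * brinv p.2 q.2 = eps a * eps b /\
  \sum_(p <- Delta a) \sum_(q <- Delta b) brinv p.1 q.1 * br p.2 q.2 = eps a * eps b.
Proof. exact: braidA.2.2.1. Qed.
Let brMr a b c : br a (b * c) = \sum_(p <- Delta a) br p.1 b * br p.2 c.
Proof. exact: braidA.2.2.2.1. Qed.
Let brMl a b c : br (a * b) c = \sum_(p <- Delta c) br b p.1 * br a p.2.
Proof. exact: braidA.2.2.2.2. Qed.

(* The summand is a function of the pair [p], not of [p.1] and [p.2], so that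
   [G p] unifies with any summand in the [linearity] tactic below. *)
Lemma lin_form_Delta (G : A * A -> k) :
  (forall b, linear_to_k (fun a => G (a, b))) -> (forall a, linear_to_k (fun b => G (a, b))) ->
  linear_to_k (fun x => \sum_(p <- Delta x) G p).
Proof.
move=> G1 G2 c u v; have pairE s : \sum_(p <- s) G p = \sum_(p <- s) G (p.1, p.2).
  by apply: eq_bigr => -[].
rewrite !pairE (Delta_linear _ _ _ (conj G1 G2)) big_cat big_map mulr_sumr /=.
by congr (_ + _); apply: eq_bigr => p _; rewrite (lin_formZ (G1 _)) -surjective_pairing.
Qed.

Lemma lin_form_Delta_comp (G : A * A -> k) (g : A -> A) :
  (forall b, linear_to_k (fun a => G (a, b))) -> (forall a, linear_to_k (fun b => G (a, b))) ->
  linear_endo g -> linear_to_k (fun x => \sum_(p <- Delta (g x)) G p).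
Proof. by move=> G1 G2; apply: (lin_form_comp (lin_form_Delta G1 G2)). Qed.

Ltac lin_endo_tac :=
  first [ exact: lin_endo_id | exact: S_linear | exact: lin_endoMl | exact: lin_endoMr
        | apply: lin_endo_comp; lin_endo_tac ].

Ltac linearity := rewrite /=; repeat first
  [ assumption
  | match goal with H : forall _, linear_to_k _ |- _ => exact: H end
  | match goal with H : forall _ _, linear_to_k _ |- _ => exact: H end
  | match goal with H : forall _ _ _, linear_to_k _ |- _ => exact: H end
  | apply: lin_form_big => ?; rewrite /=
  | apply: lin_formMl
  | apply: lin_formMr
  | apply: (lin_form_comp eps_linear); lin_endo_tac
  | apply: bilinear_compl; [eassumption | lin_endo_tac]
  | apply: bilinear_compr; [eassumption | lin_endo_tac]
  | apply: lin_form_Delta => ?; rewrite /=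
  | apply: lin_form_Delta_comp; [move=> ?; rewrite /= | move=> ?; rewrite /= | lin_endo_tac] ].

Lemma counitl_form (f : A -> k) : linear_to_k f ->
  forall a, \sum_(p <- Delta a) eps p.1 * f p.2 = f a.
Proof.
move=> lf a; rewrite -[in RHS](counitl a) (lin_form_sum lf).
by apply: eq_bigr => p _; rewrite lin_formZ.
Qed.

Lemma counitr_form (f : A -> k) : linear_to_k f ->
  forall a, \sum_(p <- Delta a) eps p.2 * f p.1 = f a.
Proof.
move=> lf a; rewrite -[in RHS](counitr a) (lin_form_sum lf).
by apply: eq_bigr => p _; rewrite lin_formZ.
Qed.

Lemma eps_scalar c : eps c%:A = c.
Proof. by rewrite lin_formZ // eps1 mulr1. Qed.

Lemma epsS a : eps (S a) = eps a.
Proof.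
have := congr1 eps (antipodel a); rewrite eps_scalar (lin_form_sum eps_linear) => <-.
rewrite -(counitr_form (lin_form_comp eps_linear S_linear) a).
by apply: eq_bigr => p _; rewrite epsM mulrC.
Qed.

Lemma conv_idempotent_eps (phi psi : A -> k) : linear_to_k phi -> linear_to_k psi ->
  (forall a, phi a = \sum_(p <- Delta a) phi p.1 * phi p.2) ->
  (forall a, \sum_(p <- Delta a) phi p.1 * psi p.2 = eps a) ->
  forall a, phi a = eps a.
Proof.
move=> lphi lpsi phi_idem phi_psi a.
rewrite -(counitr_form lphi a) -[RHS]phi_psi.
have tri : trilinear_form (fun x y z => phi x * (phi y * psi z)) by split=> ? ?; linearity.
transitivity (\sum_(p <- Delta a) \sum_(q <- Delta p.2) phi p.1 * (phi q.1 * psi q.2)).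
  by apply: eq_bigr => p _; rewrite -phi_psi mulrC mulr_sumr.
rewrite -(coassoc a tri); apply: eq_bigr => p _.
by rewrite [in RHS]phi_idem mulr_suml; apply: eq_bigr => q _; rewrite mulrA.
Qed.

Lemma br1r a : br a 1 = eps a.
Proof.
have [brinv [brinv_bil brinvP]] := br_invertible.
apply: (@conv_idempotent_eps (br^~ 1) (brinv^~ 1)); try by linearity.
  by move=> x; rewrite -brMr mulr1.
move=> x; have := (brinvP x 1).1; rewrite eps1 mulr1 exchange_big /= => <-.
have bil : bilinear_form (fun u v => \sum_(p <- Delta x) br p.1 u * brinv p.2 v).
  by split=> ?; linearity.
by rewrite (Delta1 bil) big_seq1.
Qed.

Lemma br1l b : br 1 b = eps b.
Proof.
have [brinv [brinv_bil brinvP]] := br_invertible.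
apply: (@conv_idempotent_eps (br 1) (brinv 1)); try by linearity.
  by move=> x; rewrite -brMl mulr1.
move=> x; have := (brinvP 1 x).1; rewrite eps1 mul1r => <-.
have bil : bilinear_form (fun u v => \sum_(q <- Delta x) br u q.1 * brinv v q.2).
  by split=> ?; linearity.
by rewrite (Delta1 bil) big_seq1.
Qed.

Definition conv2 (F G : A -> A -> k) a b :=
  \sum_(p <- Delta a) \sum_(q <- Delta b) F p.1 q.1 * G p.2 q.2.
Definition eps2 (a b : A) := eps a * eps b.

Lemma eq_conv2 F F' G G' : (forall a b, F a b = F' a b) -> (forall a b, G a b = G' a b) ->
  forall a b, conv2 F G a b = conv2 F' G' a b.
Proof.
by move=> eF eG a b; apply: eq_bigr => p _; apply: eq_bigr => q _; rewrite eF eG.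
Qed.

Lemma conv2_eps2r F : bilinear_form F -> forall a b, conv2 F eps2 a b = F a b.
Proof.
move=> bF a b; rewrite /conv2 -(counitr_form (bF.1 b) a); apply: eq_bigr => p _.
by rewrite -(counitr_form (bF.2 p.1) b) mulr_sumr; apply: eq_bigr => q _; rewrite /eps2; ring.
Qed.

Lemma conv2_eps2l F : bilinear_form F -> forall a b, conv2 eps2 F a b = F a b.
Proof.
move=> bF a b; rewrite /conv2 -(counitl_form (bF.1 b) a); apply: eq_bigr => p _.
by rewrite -(counitl_form (bF.2 p.2) b) mulr_sumr; apply: eq_bigr => q _; rewrite /eps2; ring.
Qed.

Lemma conv2A F G H : bilinear_form F -> bilinear_form G -> bilinear_form H ->
  forall a b, conv2 (conv2 F G) H a b = conv2 F (conv2 G H) a b.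
Proof.
move=> [F1 F2] [G1 G2] [H1 H2] a b; rewrite /conv2.
transitivity (\sum_(p <- Delta a) \sum_(p' <- Delta p.1) \sum_(q <- Delta b)
    \sum_(q' <- Delta q.1) F p'.1 q'.1 * G p'.2 q'.2 * H p.2 q.2).
  apply: eq_bigr => p _; rewrite exchange_big /=; apply: eq_bigr => q _.
  by rewrite mulr_suml; apply: eq_bigr => p' _; rewrite mulr_suml.
transitivity (\sum_(p <- Delta a) \sum_(p' <- Delta p.2) \sum_(q <- Delta b)
    \sum_(q' <- Delta q.2) F p.1 q.1 * G p'.1 q'.1 * H p'.2 q'.2); last first.
  apply: eq_bigr => p _; rewrite exchange_big /=; apply: eq_bigr => q _.
  rewrite mulr_sumr; apply: eq_bigr => p' _; rewrite mulr_sumr.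
  by apply: eq_bigr => q' _; rewrite mulrA.
have tri_a : trilinear_form (fun x y z => \sum_(q <- Delta b) \sum_(q' <- Delta q.1)
    F x q'.1 * G y q'.2 * H z q.2) by split=> ? ?; linearity.
rewrite (coassoc a tri_a); apply: eq_bigr => p _; apply: eq_bigr => p' _.
have tri_b : trilinear_form (fun x y z => F p.1 x * G p'.1 y * H p'.2 z).
  by split=> ? ?; linearity.
exact: (coassoc b tri_b).
Qed.

Lemma conv2_inverse_unique F G H :
  bilinear_form F -> bilinear_form G -> bilinear_form H ->
  (forall a b, conv2 F G a b = eps2 a b) -> (forall a b, conv2 G H a b = eps2 a b) ->
  forall a b, F a b = H a b.
Proof.
move=> bF bG bH FG GH a b.
rewrite -(conv2_eps2r bF) (eq_conv2 (fun _ _ => erefl) (fun u v => esym (GH u v))).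
rewrite -conv2A // (eq_conv2 FG (fun _ _ => erefl)).
exact: conv2_eps2l.
Qed.

Definition brS a b := br a (S b).

Lemma brS_bilinear : bilinear_form brS.
Proof. by rewrite /brS; split=> ?; linearity. Qed.

Lemma conv2_br_brS a b : conv2 br brS a b = eps2 a b.
Proof.
rewrite /conv2 /brS exchange_big /=.
rewrite (eq_bigr (fun q => br a (q.1 * S q.2))) => [|q _]; last by rewrite brMr.
rewrite -(lin_form_sum (br_bilinear.2 a)).
by rewrite antipoder (lin_formZ (br_bilinear.2 a)) br1r mulrC.
Qed.

Lemma conv2_brS_br a b : conv2 brS br a b = eps2 a b.
Proof.
rewrite /conv2 /brS exchange_big /=.
rewrite (eq_bigr (fun q => br a (S q.1 * q.2))) => [|q _]; last by rewrite brMr.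
rewrite -(lin_form_sum (br_bilinear.2 a)).
by rewrite antipodel (lin_formZ (br_bilinear.2 a)) br1r mulrC.
Qed.

Definition conv3 (F G : A -> A -> A -> k) u v c :=
  \sum_(p <- Delta u) \sum_(q <- Delta v) \sum_(r <- Delta c) F p.1 q.1 r.1 * G p.2 q.2 r.2.
Definition eps3 (u v c : A) := eps u * eps v * eps c.

Lemma eq_conv3 F F' G G' : (forall u v c, F u v c = F' u v c) ->
  (forall u v c, G u v c = G' u v c) -> forall u v c, conv3 F G u v c = conv3 F' G' u v c.
Proof.
move=> eF eG u v c; apply: eq_bigr => p _; apply: eq_bigr => q _; apply: eq_bigr => r _.
by rewrite eF eG.
Qed.

Lemma conv3_eps3r F : trilinear_form F -> forall u v c, conv3 F eps3 u v c = F u v c.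
Proof.
move=> [F1 F2 F3] u v c; rewrite /conv3 -(counitr_form (F1 v c) u); apply: eq_bigr => p _.
rewrite -(counitr_form (F2 p.1 c) v) mulr_sumr; apply: eq_bigr => q _.
by rewrite -(counitr_form (F3 p.1 q.1) c) !mulr_sumr; apply: eq_bigr => r _; rewrite /eps3; ring.
Qed.

Lemma conv3_eps3l F : trilinear_form F -> forall u v c, conv3 eps3 F u v c = F u v c.
Proof.
move=> [F1 F2 F3] u v c; rewrite /conv3 -(counitl_form (F1 v c) u); apply: eq_bigr => p _.
rewrite -(counitl_form (F2 p.2 c) v) mulr_sumr; apply: eq_bigr => q _.
by rewrite -(counitl_form (F3 p.2 q.2) c) !mulr_sumr; apply: eq_bigr => r _; rewrite /eps3; ring.
Qed.

Lemma conv3A F G H : trilinear_form F -> trilinear_form G -> trilinear_form H ->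
  forall u v c, conv3 (conv3 F G) H u v c = conv3 F (conv3 G H) u v c.
Proof.
move=> [F1 F2 F3] [G1 G2 G3] [H1 H2 H3] u v c; rewrite /conv3.
transitivity (\sum_(p <- Delta u) \sum_(p' <- Delta p.1) \sum_(q <- Delta v)
    \sum_(q' <- Delta q.1) \sum_(r <- Delta c) \sum_(r' <- Delta r.1)
    F p'.1 q'.1 r'.1 * G p'.2 q'.2 r'.2 * H p.2 q.2 r.2).
  apply: eq_bigr => p _.
  transitivity (\sum_(q <- Delta v) \sum_(r <- Delta c) \sum_(p' <- Delta p.1)
      \sum_(q' <- Delta q.1) \sum_(r' <- Delta r.1)
      F p'.1 q'.1 r'.1 * G p'.2 q'.2 r'.2 * H p.2 q.2 r.2).
    apply: eq_bigr => q _; apply: eq_bigr => r _; rewrite mulr_suml.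
    by apply: eq_bigr => p' _; rewrite mulr_suml; apply: eq_bigr => q' _; rewrite mulr_suml.
  by rewrite exchange_big3; apply: eq_bigr => p' _; apply: eq_bigr => q _; rewrite exchange_big.
transitivity (\sum_(p <- Delta u) \sum_(p' <- Delta p.2) \sum_(q <- Delta v)
    \sum_(q' <- Delta q.2) \sum_(r <- Delta c) \sum_(r' <- Delta r.2)
    F p.1 q.1 r.1 * G p'.1 q'.1 r'.1 * H p'.2 q'.2 r'.2); last first.
  apply: eq_bigr => p _.
  transitivity (\sum_(q <- Delta v) \sum_(r <- Delta c) \sum_(p' <- Delta p.2)
      \sum_(q' <- Delta q.2) \sum_(r' <- Delta r.2)
      F p.1 q.1 r.1 * G p'.1 q'.1 r'.1 * H p'.2 q'.2 r'.2); last first.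
    apply: eq_bigr => q _; apply: eq_bigr => r _; rewrite mulr_sumr.
    apply: eq_bigr => p' _; rewrite mulr_sumr; apply: eq_bigr => q' _; rewrite mulr_sumr.
    by apply: eq_bigr => r' _; rewrite mulrA.
  by rewrite exchange_big3; apply: eq_bigr => p' _; apply: eq_bigr => q _; rewrite exchange_big.
have tri_u : trilinear_form (fun x y z => \sum_(q <- Delta v) \sum_(q' <- Delta q.1)
    \sum_(r <- Delta c) \sum_(r' <- Delta r.1)
    F x q'.1 r'.1 * G y q'.2 r'.2 * H z q.2 r.2) by split=> ? ?; linearity.
rewrite (coassoc u tri_u); apply: eq_bigr => p _; apply: eq_bigr => p' _.
have tri_v : trilinear_form (fun x y z => \sum_(r <- Delta c) \sum_(r' <- Delta r.1)
    F p.1 x r'.1 * G p'.1 y r'.2 * H p'.2 z r.2) by split=> ? ?; linearity.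
rewrite (coassoc v tri_v); apply: eq_bigr => q _; apply: eq_bigr => q' _.
have tri_c : trilinear_form (fun x y z => F p.1 q.1 x * G p'.1 q'.1 y * H p'.2 q'.2 z).
  by split=> ? ?; linearity.
exact: (coassoc c tri_c).
Qed.

Lemma conv3_inverse_unique F G H :
  trilinear_form F -> trilinear_form G -> trilinear_form H ->
  (forall u v c, conv3 F G u v c = eps3 u v c) -> (forall u v c, conv3 G H u v c = eps3 u v c) ->
  forall u v c, F u v c = H u v c.
Proof.
move=> tF tG tH FG GH u v c.
rewrite -(conv3_eps3r tF) (eq_conv3 (fun _ _ _ => erefl) (fun x y z => esym (GH x y z))).
rewrite -conv3A // (eq_conv3 FG (fun _ _ _ => erefl)).
exact: conv3_eps3l.
Qed.

Lemma coassoc_DeltaDelta c (f : A -> A -> A -> A -> k) :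
  (forall b c d, linear_to_k (fun x => f x b c d)) ->
  (forall a c d, linear_to_k (fun x => f a x c d)) ->
  (forall a b d, linear_to_k (fun x => f a b x d)) ->
  (forall a b c, linear_to_k (fun x => f a b c x)) ->
    \sum_(r <- Delta c) \sum_(t <- Delta r.1) \sum_(s <- Delta r.2) f t.1 t.2 s.1 s.2
  = \sum_(r <- Delta c) \sum_(s <- Delta r.2) \sum_(t <- Delta s.1) f r.1 t.1 t.2 s.2.
Proof.
move=> f1 f2 f3 f4.
have tri : trilinear_form (fun x y z => \sum_(s <- Delta z) f x y s.1 s.2).
  by split=> ? ?; linearity.
rewrite (coassoc c tri) /=; apply: eq_bigr => r _.
have tri_r : trilinear_form (fun x y z => f r.1 x y z) by split=> ? ?; linearity.
by rewrite -(coassoc r.2 tri_r).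
Qed.

Definition brSM u v c := br (u * v) (S c).
Definition brM u v c := br (u * v) c.
Definition brS_split u v c := \sum_(r <- Delta c) brS u r.1 * brS v r.2.

Lemma conv3_brSM_brM u v c : conv3 brSM brM u v c = eps3 u v c.
Proof.
have bil : bilinear_form (fun x y => \sum_(r <- Delta c) br x (S r.1) * br y r.2).
  by split=> ?; linearity.
have := DeltaM u v bil; rewrite /= big_allpairs_dep /= => DeltaM_uv.
rewrite /conv3 /brSM /brM -DeltaM_uv.
by have := conv2_brS_br (u * v) c; rewrite /conv2 /brS /eps2 /eps3 epsM.
Qed.

Lemma conv3_brM_brS_split u v c : conv3 brM brS_split u v c = eps3 u v c.
Proof.
rewrite /conv3 /brM /brS_split /brS.
transitivity (\sum_(p <- Delta u) \sum_(q <- Delta v) \sum_(r <- Delta c)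
    \sum_(s <- Delta r.2) \sum_(t <- Delta s.1)
    br q.1 r.1 * br p.1 t.1 * (br p.2 (S t.2) * br q.2 (S s.2))).
  apply: eq_bigr => p _; apply: eq_bigr => q _.
  rewrite -(@coassoc_DeltaDelta c
    (fun w1 w2 w3 w4 => br q.1 w1 * br p.1 w2 * (br p.2 (S w3) * br q.2 (S w4))));
    try by move=> *; linearity.
  apply: eq_bigr => r _; rewrite brMl mulr_suml; apply: eq_bigr => t _.
  by rewrite mulr_sumr.
transitivity (\sum_(q <- Delta v) \sum_(r <- Delta c)
    \sum_(s <- Delta r.2) br q.1 r.1 * br q.2 (S s.2) * (eps u * eps s.1)).
  rewrite exchange_big /=; apply: eq_bigr => q _.
  rewrite exchange_big /=; apply: eq_bigr => r _.
  rewrite exchange_big /=; apply: eq_bigr => s _.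
  rewrite -[eps u * eps s.1](conv2_br_brS u s.1) /conv2 /brS mulr_sumr.
  by apply: eq_bigr => p _; rewrite mulr_sumr; apply: eq_bigr => t _; ring.
transitivity (\sum_(q <- Delta v) \sum_(r <- Delta c) eps u * (br q.1 r.1 * br q.2 (S r.2))).
  apply: eq_bigr => q _; apply: eq_bigr => r _.
  rewrite -(counitl_form (f := fun x => br q.2 (S x))); last by linearity.
  by rewrite !mulr_sumr; apply: eq_bigr => s _; ring.
under eq_bigr do rewrite -mulr_sumr.
rewrite -mulr_sumr; have := conv2_br_brS v c; rewrite /conv2 /brS /eps2 /eps3 => ->.
by rewrite mulrA.
Qed.

(* [brSM] and [brS_split] are a left and a right convolution inverse of [brM]. *)
Lemma brSM_split u v c : brS (u * v) c = \sum_(r <- Delta c) brS u r.1 * brS v r.2.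
Proof.
have tri_brSM : trilinear_form brSM by rewrite /brSM; split=> ? ?; linearity.
have tri_brM : trilinear_form brM by rewrite /brM; split=> ? ?; linearity.
have tri_split : trilinear_form brS_split by rewrite /brS_split /brS; split=> ? ?; linearity.
exact: (conv3_inverse_unique tri_brSM tri_brM tri_split conv3_brSM_brM conv3_brM_brS_split).
Qed.

Definition brSS_form a b := br (S a) (S b).

Lemma conv2_brSS_brS a b : conv2 brSS_form brS a b = eps2 a b.
Proof.
rewrite /conv2 /brSS_form.
transitivity (\sum_(p <- Delta a) brS (S p.1 * p.2) b).
  by apply: eq_bigr => p _; rewrite brSM_split.
have lin_brS : linear_to_k (brS^~ b) by rewrite /brS; linearity.
rewrite -(lin_form_sum lin_brS).
rewrite antipodel (lin_formZ lin_brS).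
by rewrite /brS br1l epsS.
Qed.

(* [brSS_form] and [br] are a left and a right convolution inverse of [brS]. *)
Lemma brSS a b : br (S a) (S b) = br a b.
Proof.
have bil : bilinear_form brSS_form by rewrite /brSS_form; split=> ?; linearity.
exact: (conv2_inverse_unique bil brS_bilinear br_bilinear conv2_brSS_brS conv2_brS_br).
Qed.

Local Notation U0 := (inU0 br S).

Definition pick_plus (x : A -> k) : A := epsilon (inhabits 0) (fun a => x =1 lplus br a).
Definition pick_minus (x : A -> k) : A := epsilon (inhabits 0) (fun b => x =1 lminus br S b).

Lemma pick_plusP x : (exists a, x =1 lplus br a) -> x =1 lplus br (pick_plus x).
Proof. exact: epsilon_spec. Qed.

Lemma pick_minusP x : (exists b, x =1 lminus br S b) -> x =1 lminus br S (pick_minus x).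
Proof. exact: epsilon_spec. Qed.

(* For [x = l+(a)] and [y = l-(b)] both [<a | S b>] and [<a | b>] are values of
   [x] or [y], so they can be computed from any chosen preimage. *)
Definition U0_pairing (x y : A -> k) := y (pick_plus x).
Definition U0_pairing_inv (x y : A -> k) := x (pick_minus y).

Lemma U0_pairingE x y a b : x =1 lplus br a -> y =1 lminus br S b ->
  U0_pairing x y = br a (S b).
Proof.
move=> xa yb; rewrite /U0_pairing yb /lminus.
by have := pick_plusP (ex_intro _ a xa) (S b); rewrite xa /lplus => <-.
Qed.

Lemma U0_pairing_plus x y b : (exists a, x =1 lplus br a) -> y =1 lminus br S b ->
  U0_pairing x y = x (S b).
Proof. by move=> [a xa] yb; rewrite (U0_pairingE xa yb) xa. Qed.

Lemma U0_pairing_minus x y a : x =1 lplus br a -> (exists b, y =1 lminus br S b) ->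
  U0_pairing x y = y a.
Proof. by move=> xa [b yb]; rewrite (U0_pairingE xa yb) yb. Qed.

Lemma U0_pairing_invE x y a b : x =1 lplus br a -> y =1 lminus br S b ->
  U0_pairing_inv x y = br a b.
Proof.
move=> xa yb; rewrite /U0_pairing_inv xa /lplus -brSS.
by have := pick_minusP (ex_intro _ b yb) (S a); rewrite yb /lminus => <-; rewrite brSS.
Qed.

Lemma lin_form_U0 x : U0 x -> linear_to_k x.
Proof. by move=> [[a xa] _] c u v; rewrite !xa; apply: br_bilinear.2. Qed.

Lemma dual_mul_lplus x y a a' : x =1 lplus br a -> y =1 lplus br a' ->
  dual_mul Delta x y =1 lplus br (a' * a).
Proof. by move=> xa ya' c; rewrite /lplus brMl; apply: eq_bigr => r _; rewrite xa ya'. Qed.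

Lemma U0_ext f g : f =1 g -> U0 f -> U0 g.
Proof. by move=> fg [[a fa] [b fb]]; split; [exists a | exists b] => z; rewrite -fg. Qed.

Lemma U0_lincomb c f g : U0 f -> U0 g -> U0 (fun z => c * f z + g z).
Proof.
move=> [[a fa] [b fb]] [[a' ga'] [b' gb']]; split.
  by exists (c *: a + a') => z; rewrite fa ga' /lplus br_bilinear.1.
by exists (c *: b + b') => z; rewrite fb gb' /lminus S_linear br_bilinear.2.
Qed.

Lemma U0_mulr x v : U0 x -> U0 (fun u => x (u * v)).
Proof.
move=> [[a xa] [c xc]]; split.
  exists (\sum_(p <- Delta a) br p.2 v *: p.1) => u.
  rewrite xa /lplus brMr (lin_form_sum (br_bilinear.1 u)).
  by apply: eq_bigr => p _; rewrite (lin_formZ (br_bilinear.1 u)) mulrC.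
exists (\sum_(r <- Delta c) br v (S r.2) *: r.1) => u.
rewrite xc /lminus -/(brS (u * v) c) brSM_split (lin_endo_sum S_linear).
rewrite (lin_form_sum (br_bilinear.2 u)); apply: eq_bigr => r _.
by rewrite (lin_endoZ S_linear) (lin_formZ (br_bilinear.2 u)) mulrC.
Qed.

Lemma U0_mull x u : U0 x -> U0 (fun v => x (u * v)).
Proof.
move=> [[a xa] [c xc]]; split.
  exists (\sum_(p <- Delta a) br p.1 u *: p.2) => v.
  rewrite xa /lplus brMr (lin_form_sum (br_bilinear.1 v)).
  by apply: eq_bigr => p _; rewrite (lin_formZ (br_bilinear.1 v)).
exists (\sum_(r <- Delta c) br u (S r.1) *: r.2) => v.
rewrite xc /lminus -/(brS (u * v) c) brSM_split (lin_endo_sum S_linear).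
rewrite (lin_form_sum (br_bilinear.2 v)); apply: eq_bigr => r _.
by rewrite (lin_endoZ S_linear) (lin_formZ (br_bilinear.2 v)).
Qed.

Lemma U0_coprod x : U0 x -> exists dx, coprod_rep U0 x dx.
Proof.
move=> U0x; have [[a xa] _] := U0x.
have x_repr u v : x (u * v) = \sum_(p <- [seq (lplus br p.1, lplus br p.2) | p <- Delta a])
    p.1 u * p.2 v by rewrite xa /lplus brMr big_map.
have [d [U0_d d_repr]] := finite_rank_decomposition U0_ext U0_lincomb x_repr
  (fun v => U0_mulr v U0x) (fun u => U0_mull u U0x).
by exists d; split=> [i lt_i|]; [apply: U0_d | apply: d_repr].
Qed.

Lemma eq_big_coprod (P : (A -> k) -> Prop) x dx (F G : (A -> k) * (A -> k) -> k) :
  coprod_rep P x dx -> (forall p, P p.1 -> P p.2 -> F p = G p) ->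
  \sum_(p <- dx) F p = \sum_(p <- dx) G p.
Proof.
move=> [P_dx _] FG; rewrite (big_nth (x, x)) [RHS](big_nth (x, x)) !big_mkord.
by apply: eq_bigr => i _; have [P1 P2] := P_dx i (ltn_ord i); apply: FG.
Qed.

Lemma U0_pairingMr x y z dx : U0 x -> U0 y -> U0 z -> coprod_rep U0 x dx ->
  U0_pairing x (dual_mul Delta y z) = \sum_(p <- dx) U0_pairing p.1 y * U0_pairing p.2 z.
Proof.
move=> [xa _] [_ [b yb]] [_ [b' zb']] dxP.
rewrite (eq_big_coprod (G := fun p => p.1 (S b) * p.2 (S b')) dxP); last first.
  by move=> p [p1 _] [p2 _]; rewrite (U0_pairing_plus p1 yb) (U0_pairing_plus p2 zb').
rewrite -dxP.2 (pick_plusP xa) /lplus brMr /U0_pairing /dual_mul.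
by apply: eq_bigr => p _; rewrite yb zb'.
Qed.

Lemma U0_pairingMl x y z dz : U0 x -> U0 y -> U0 z -> coprod_rep U0 z dz ->
  U0_pairing (dual_mul Delta x y) z = \sum_(p <- dz) U0_pairing y p.1 * U0_pairing x p.2.
Proof.
move=> [[a xa] _] [[a' ya'] _] [_ [b zb]] dzP.
rewrite (eq_big_coprod (G := fun p => p.1 a' * p.2 a) dzP); last first.
  by move=> p [_ p1] [_ p2]; rewrite (U0_pairing_minus ya' p1) (U0_pairing_minus xa p2).
by rewrite -dzP.2 (U0_pairingE (dual_mul_lplus xa ya') zb) zb.
Qed.

Lemma U0_pairing_conv_invr x y dx dy : U0 x -> U0 y ->
  coprod_rep U0 x dx -> coprod_rep U0 y dy ->
  \sum_(p <- dx) \sum_(q <- dy) U0_pairing p.1 q.1 * U0_pairing_inv p.2 q.2 = x 1 * y 1.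
Proof.
move=> [[a xa] _] U0y dxP dyP; rewrite exchange_big /=.
transitivity (\sum_(q <- dy) x (S (pick_minus q.1) * pick_minus q.2)).
  apply: (eq_big_coprod dyP) => q [_ q1] [_ q2]; rewrite dxP.2.
  apply: (eq_big_coprod dxP) => p [p1 _] [p2 _].
  rewrite (U0_pairing_plus p1 (pick_minusP q1)).
  by rewrite (U0_pairing_invE (pick_plusP p2) (pick_minusP q2)) (pick_plusP p2).
transitivity (\sum_(t <- Delta a) \sum_(q <- dy) q.1 t.1 * q.2 (S t.2)).
  rewrite exchange_big /=; apply: (eq_big_coprod dyP) => q [_ q1] [_ q2].
  rewrite xa /lplus brMr; apply: eq_bigr => t _.
  by rewrite (pick_minusP q1) (pick_minusP q2) /lminus brSS.
transitivity (y (\sum_(t <- Delta a) t.1 * S t.2)).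
  by rewrite (lin_form_sum (lin_form_U0 U0y)); apply: eq_bigr => t _; rewrite dyP.2.
by rewrite antipoder (lin_formZ (lin_form_U0 U0y)) xa /lplus br1r.
Qed.

Lemma U0_pairing_conv_invl x y dx dy : U0 x -> U0 y ->
  coprod_rep U0 x dx -> coprod_rep U0 y dy ->
  \sum_(p <- dx) \sum_(q <- dy) U0_pairing_inv p.1 q.1 * U0_pairing p.2 q.2 = x 1 * y 1.
Proof.
move=> [[a xa] _] U0y dxP dyP; rewrite exchange_big /=.
transitivity (\sum_(q <- dy) x (pick_minus q.1 * S (pick_minus q.2))).
  apply: (eq_big_coprod dyP) => q [_ q1] [_ q2]; rewrite dxP.2.
  apply: (eq_big_coprod dxP) => p [p1 _] [p2 _].
  rewrite (U0_pairing_plus p2 (pick_minusP q2)).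
  by rewrite (U0_pairing_invE (pick_plusP p1) (pick_minusP q1)) (pick_plusP p1).
transitivity (\sum_(t <- Delta a) \sum_(q <- dy) q.1 (S t.1) * q.2 t.2).
  rewrite exchange_big /=; apply: (eq_big_coprod dyP) => q [_ q1] [_ q2].
  rewrite xa /lplus brMr; apply: eq_bigr => t _.
  by rewrite (pick_minusP q1) (pick_minusP q2) /lminus brSS.
transitivity (y (\sum_(t <- Delta a) S t.1 * t.2)).
  by rewrite (lin_form_sum (lin_form_U0 U0y)); apply: eq_bigr => t _; rewrite dyP.2.
by rewrite antipodel (lin_formZ (lin_form_U0 U0y)) xa /lplus br1r.
Qed.

Lemma U0_braid_lhs x y a a' dx dy c : x =1 lplus br a -> y =1 lplus br a' ->
  coprod_rep U0 x dx -> coprod_rep U0 y dy ->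
    \sum_(p <- dx) \sum_(q <- dy) U0_pairing p.1 q.1 * dual_mul Delta q.2 p.2 c
  = \sum_(t <- Delta a) \sum_(t' <- Delta a') br t'.1 t.1 * br (t.2 * t'.2) c.
Proof.
move=> xa ya' dxP dyP.
transitivity (\sum_(q <- dy) \sum_(r <- Delta c) q.2 r.1 * x (S (pick_minus q.1) * r.2)).
  rewrite exchange_big /=; apply: (eq_big_coprod dyP) => q [_ q1] _.
  transitivity (\sum_(p <- dx) \sum_(r <- Delta c)
      q.2 r.1 * (p.1 (S (pick_minus q.1)) * p.2 r.2)).
    apply: (eq_big_coprod dxP) => p [p1 _] _.
    rewrite (U0_pairing_plus p1 (pick_minusP q1)) /dual_mul mulr_sumr.
    by apply: eq_bigr => r _; ring.
  by rewrite exchange_big /=; apply: eq_bigr => r _; rewrite dxP.2 mulr_sumr.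
transitivity (\sum_(t <- Delta a) \sum_(r <- Delta c) br t.2 r.2 * y (t.1 * r.1)).
  transitivity (\sum_(q <- dy) \sum_(r <- Delta c) \sum_(t <- Delta a)
      q.2 r.1 * q.1 t.1 * br t.2 r.2).
    apply: (eq_big_coprod dyP) => q [_ q1] _; apply: eq_bigr => r _.
    rewrite xa /lplus brMr mulr_sumr; apply: eq_bigr => t _.
    by rewrite (pick_minusP q1) /lminus mulrA.
  rewrite exchange_big3; apply: eq_bigr => t _; rewrite exchange_big /=.
  apply: eq_bigr => r _; rewrite dyP.2 mulr_sumr; apply: eq_bigr => q _.
  by ring.
apply: eq_bigr => t _.
transitivity (\sum_(r <- Delta c) \sum_(t' <- Delta a')
    br t'.1 t.1 * (br t'.2 r.1 * br t.2 r.2)).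
  apply: eq_bigr => r _; rewrite ya' /lplus brMr mulr_sumr.
  by apply: eq_bigr => t' _; ring.
by rewrite exchange_big /=; apply: eq_bigr => t' _; rewrite brMl mulr_sumr.
Qed.

Lemma U0_braid_rhs x y a a' dx dy c : x =1 lplus br a -> y =1 lplus br a' ->
  coprod_rep U0 x dx -> coprod_rep U0 y dy ->
    \sum_(p <- dx) \sum_(q <- dy) U0_pairing p.2 q.2 * dual_mul Delta p.1 q.1 c
  = \sum_(t <- Delta a) \sum_(t' <- Delta a') br t'.2 t.2 * br (t'.1 * t.1) c.
Proof.
move=> xa ya' dxP dyP.
transitivity (\sum_(q <- dy) \sum_(r <- Delta c) q.1 r.2 * x (r.1 * S (pick_minus q.2))).
  rewrite exchange_big /=; apply: (eq_big_coprod dyP) => q _ [_ q2].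
  transitivity (\sum_(p <- dx) \sum_(r <- Delta c)
      q.1 r.2 * (p.1 r.1 * p.2 (S (pick_minus q.2)))).
    apply: (eq_big_coprod dxP) => p _ [p2 _].
    rewrite (U0_pairing_plus p2 (pick_minusP q2)) /dual_mul mulr_sumr.
    by apply: eq_bigr => r _; ring.
  by rewrite exchange_big /=; apply: eq_bigr => r _; rewrite dxP.2 mulr_sumr.
transitivity (\sum_(t <- Delta a) \sum_(r <- Delta c) br t.1 r.1 * y (r.2 * t.2)).
  transitivity (\sum_(q <- dy) \sum_(r <- Delta c) \sum_(t <- Delta a)
      q.1 r.2 * br t.1 r.1 * q.2 t.2).
    apply: (eq_big_coprod dyP) => q _ [_ q2]; apply: eq_bigr => r _.
    rewrite xa /lplus brMr mulr_sumr; apply: eq_bigr => t _.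
    by rewrite (pick_minusP q2) /lminus mulrA.
  rewrite exchange_big3; apply: eq_bigr => t _; rewrite exchange_big /=.
  apply: eq_bigr => r _; rewrite dyP.2 mulr_sumr; apply: eq_bigr => q _.
  by ring.
apply: eq_bigr => t _.
transitivity (\sum_(r <- Delta c) \sum_(t' <- Delta a')
    br t'.2 t.2 * (br t.1 r.1 * br t'.1 r.2)).
  apply: eq_bigr => r _; rewrite ya' /lplus brMr mulr_sumr.
  by apply: eq_bigr => t' _; ring.
by rewrite exchange_big /=; apply: eq_bigr => t' _; rewrite brMl mulr_sumr.
Qed.

Lemma U0_pairing_braid x y dx dy : U0 x -> U0 y ->
  coprod_rep U0 x dx -> coprod_rep U0 y dy -> forall c,
    \sum_(p <- dx) \sum_(q <- dy) U0_pairing p.1 q.1 * dual_mul Delta q.2 p.2 c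
  = \sum_(p <- dx) \sum_(q <- dy) U0_pairing p.2 q.2 * dual_mul Delta p.1 q.1 c.
Proof.
move=> [[a xa] _] [[a' ya'] _] dxP dyP c.
rewrite (U0_braid_lhs c xa ya' dxP dyP) (U0_braid_rhs c xa ya' dxP dyP).
have lin_c : linear_to_k (br^~ c) by apply: br_bilinear.1.
have br_c_sum (G : A * A -> A * A -> k) (H : A * A -> A * A -> A) :
    br (\sum_(t' <- Delta a') \sum_(t <- Delta a) G t' t *: H t' t) c
  = \sum_(t' <- Delta a') \sum_(t <- Delta a) G t' t * br (H t' t) c.
  rewrite (lin_form_sum lin_c); apply: eq_bigr => t' _.
  by rewrite (lin_form_sum lin_c); apply: eq_bigr => t _; rewrite (lin_formZ lin_c).
have := congr1 (br^~ c) (br_braid a' a); rewrite /= !br_c_sum => braid_c.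
by rewrite exchange_big [RHS]exchange_big /= braid_c.
Qed.

Lemma U0_pairing_bilinear : bilinear_on U0 U0_pairing.
Proof.
split=> [c x x' y U0x U0x' [_ [b yb]] | c x y y' _ _ _]; last by [].
have [cx_plus _] := U0_lincomb c U0x U0x'.
by rewrite (U0_pairing_plus cx_plus yb) (U0_pairing_plus U0x.1 yb) (U0_pairing_plus U0x'.1 yb).
Qed.

Lemma U0_pairing_inv_bilinear : bilinear_on U0 U0_pairing_inv.
Proof.
split=> [c x x' y _ _ _ | c x y y' [[a xa] _] [_ [b yb]] [_ [b' y'b']]]; first by [].
have yy'_def : (fun z => c * y z + y' z) =1 lminus br S (c *: b + b').
  by move=> z; rewrite yb y'b' /lminus S_linear br_bilinear.2.
rewrite (U0_pairing_invE xa yy'_def) (U0_pairing_invE xa yb) (U0_pairing_invE xa y'b').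
exact: br_bilinear.2.
Qed.

Lemma U0_pairing_is_braiding : is_braiding_on Delta U0 U0_pairing.
Proof.
split; first exact: U0_pairing_bilinear.
split; first exact: U0_coprod.
split; first exact: U0_pairing_braid.
split.
  exists U0_pairing_inv; split; first exact: U0_pairing_inv_bilinear.
  by move=> x y dx dy U0x U0y dxP dyP; split;
    [apply: U0_pairing_conv_invr | apply: U0_pairing_conv_invl].
by split; [apply: U0_pairingMr | apply: U0_pairingMl].
Qed.

End BraidedHopfAlgebra.

Theorem mainTheorem1 (k : fieldType) (A : algType k)
    (Delta : A -> seq (A * A)) (eps : A -> k) (S : A -> A) (br : A -> A -> k) :
  is_hopf Delta eps S -> is_braiding Delta eps br ->
  (forall (x y : A -> k) (a a' b b' : A),
     inU0 br S x -> inU0 br S y ->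
     x =1 lplus br a -> x =1 lplus br a' ->
     y =1 lminus br S b -> y =1 lminus br S b' ->
     br a (S b) = br a' (S b')) /\
  (exists form : (A -> k) -> (A -> k) -> k,
     (forall (x y : A -> k) (a b : A), inU0 br S x -> inU0 br S y ->
        x =1 lplus br a -> y =1 lminus br S b -> form x y = br a (S b)) /\
     is_braiding_on Delta (inU0 br S) form).
Proof.
move=> hopfA braidA; split.
  move=> x y a a' b b' _ _ xa xa' yb yb'.
  have /esym := yb a; rewrite yb' /lminus => ->.
  by have := xa (S b'); rewrite xa' /lplus => ->.
exists (U0_pairing br); split.
  by move=> x y a b _ _; apply: U0_pairingE.
exact: U0_pairing_is_braiding hopfA braidA.
Qed.
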